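(* Let $d\ge2$, $L\ge1$ an integer and $0<x<\frac{1}{(2d-1)!}$. Let $\Gamma\subset B_L=[0,L)^d\cap\mathbb Z^d$ be such that for every $i\in\{1,\dots,d\}$, $\Gamma$ contains (entirely) at least $(1-x)L^{d-1}$ columns of $B_L$ parallel to $e_i$. Then $\Gamma$ contains a connected subset (for the nearest-neighbour graph of $\mathbb Z^d$) of cardinality at least $(1-(2d-1)!\,x)L^d$.
   Context: $e_1,\dots,e_d$ is the standard basis of $\mathbb Z^d$. A column of $B_L$ parallel to $e_i$ is a set of the form $\{y\in B_L: y_j=a_j\text{ for all }j\neq i\}$ for fixed integers $(a_j)_{j\neq i}$ with $0\le a_j<L$. *)

From HB Require Import structures.
From mathcomp Require Import all_boot all_order all_algebra.
From mathcomp Require Import reals.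
Set Implicit Arguments. Unset Strict Implicit. Unset Printing Implicit Defensive.

Definition point (d L : nat) := {ffun 'I_d -> 'I_L}.

(* Nearest-neighbour adjacency of Z^d: l1-distance exactly 1. *)
Definition nn_adj (d L : nat) (y z : point d L) : bool :=
  (\sum_(j < d) ((y j - z j) + (z j - y j)))%N == 1%N.

Definition column (d L : nat) (i : 'I_d) (a : point d L) : {set point d L} :=
  [set y : point d L | [forall j : 'I_d, (j != i) ==> (y j == a j)]].

Definition columns_in (d L : nat) (i : 'I_d) (G : {set point d L})
  : {set {set point d L}} :=
  [set column i a | a in [pred a : point d L | column i a \subset G]].

Definition nn_connected (d L : nat) (S : {set point d L}) : Prop :=
  forall u v, u \in S -> v \in S ->
    connect (fun y z => [&& y \in S, z \in S & nn_adj y z]) u v.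

From HB Require Import structures.
From mathcomp Require Import all_boot all_order all_algebra.
From mathcomp Require Import reals lra zify.
Import Order.TTheory GRing.Theory Num.Theory.
Local Open Scope ring_scope.
Set Implicit Arguments. Unset Strict Implicit. Unset Printing Implicit Defensive.

(* Proof by an averaging ("random hub") argument, which even gives the
   stronger bound (1 - d x) L^d.
   Call y a full point in direction k if the column through y parallel to e_k
   lies in G; at most x L^d points are not full in direction k.  For a hub r
   and a point y, let mix k y r take its first k coordinates from r and the
   others from y: mix 0 y r = y, mix d y r = r, and mix (k+1) y r lies on the
   e_k-column through mix k y r.  If every mix k y r is full in direction k,
   y is "unblocked" and the staircase of these d columns joins y to r inside
   G.  The union of the staircases of all unblocked y is therefore a
   connected subset of G containing every unblocked point.  Since
   (y, r) |-> (mix k y r, mix k r y) is an involution, each k contributes at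
   most L^d * (#non-full points) blocked pairs; hence some hub r blocks at
   most sum_k #(non-full in direction k) <= d x L^d points. *)

Section Box.
Variables d L : nat.
Implicit Types (y z r a b : point d L) (S G : {set point d L}).

Lemma card_point : #|point d L| = (L ^ d)%N.
Proof. by rewrite /point card_ffun !card_ord. Qed.

Definition induced_adj S y z := [&& y \in S, z \in S & nn_adj y z].

Lemma induced_adj_sym S : symmetric (induced_adj S).
Proof.
move=> y z; rewrite /induced_adj /nn_adj andbCA.
by under eq_bigr do rewrite addnC.
Qed.

Lemma column_eq (i : 'I_d) a b :
  (forall j, j != i -> a j = b j) -> column i a = column i b.
Proof.
move=> eq_ab; apply/setP=> z; rewrite !inE.
by apply: eq_forallb => j; case: (eqVneq j i) => // /eq_ab ->.
Qed.

Lemma column_refl (i : 'I_d) a : a \in column i a.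
Proof. by rewrite inE; apply/forallP=> j; apply/implyP. Qed.

(* A column is a path of the grid: a column inside S is connected in S. *)
Lemma column_connect (i : 'I_d) a S : column i a \subset S ->
  {in column i a &, forall y z, connect (induced_adj S) y z}.
Proof.
move=> colS.
pose q (t : nat) : point d L :=
  [ffun j => if j == i then insubd (a i) t else a j].
have q_col t : q t \in column i a.
  by rewrite inE; apply/forallP=> j; apply/implyP=> /negbTE ji; rewrite ffunE ji.
have q_val t : (t < L)%N -> val (q t i) = t.
  by move=> tL; rewrite ffunE eqxx val_insubd tL.
have q_param y : y \in column i a -> y = q (y i).
  rewrite inE => /forallP col_y; apply/ffunP=> j; rewrite ffunE.
  case: (eqVneq j i) => [->|ji]; first by apply: val_inj; rewrite val_insubd ltn_ord.
  by have /implyP/(_ ji)/eqP := col_y j.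
have q_to0 t : (t < L)%N -> connect (induced_adj S) (q t) (q 0).
  elim: t => [|t IH] tL; first exact: connect0.
  apply: connect_trans (IH (ltnW tL)); apply: connect1.
  rewrite /induced_adj !(subsetP colS) //= /nn_adj (bigD1 i) //=.
  rewrite (q_val _ tL) (q_val _ (ltnW tL)) subSnn.
  have -> : (t - t.+1 = 0)%N by apply/eqP; rewrite subn_eq0.
  by rewrite big1 // => j ji; rewrite !ffunE (negbTE ji) subnn.
move=> y z /q_param -> /q_param ->.
apply: connect_trans (q_to0 _ (ltn_ord _)) _.
by rewrite (sym_connect_sym (induced_adj_sym S)); apply: q_to0.
Qed.

Definition full_points (i : 'I_d) G := [set y | column i y \subset G].

(* Each column of G contributes its L points to the full points. *)
Lemma card_full_points (i : 'I_d) G :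
  (#|columns_in i G| * L <= #|full_points i G|)%N.
Proof.
pose f y := (column i y, y i).
have : setX (columns_in i G) [set: 'I_L] \subset f @: full_points i G.
  apply/subsetP=> [[C t]]; rewrite inE /= in_setT andbT.
  case/imsetP=> a; rewrite inE => colG ->.
  pose a' : point d L := [ffun j => if j == i then t else a j].
  have col_a' : column i a' = column i a.
    by apply: column_eq => j /negbTE ji; rewrite ffunE ji.
  apply/imsetP; exists a'; first by rewrite inE col_a'.
  by rewrite /f col_a' ffunE eqxx.
move/subset_leq_card; rewrite cardsX cardsT card_ord => le_card.
exact: leq_trans le_card (leq_imset_card _ _).
Qed.

Definition mix (k : nat) y r : point d L :=
  [ffun j : 'I_d => if (j < k)%N then r j else y j].

Lemma mix0 y r : mix 0 y r = y.
Proof. by apply/ffunP=> j; rewrite ffunE. Qed.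

Lemma mix_all y r : mix d y r = r.
Proof. by apply/ffunP=> j; rewrite ffunE ltn_ord. Qed.

Lemma mixS (k : 'I_d) y r : mix k.+1 y r \in column k (mix k y r).
Proof.
rewrite inE; apply/forallP=> j; apply/implyP=> jk; rewrite !ffunE ltnS leq_eqVlt.
by have -> : (nat_of_ord j == k) = false by apply/negbTE.
Qed.

Lemma mix_swap (k : nat) y r : mix k (mix k y r) (mix k r y) = y.
Proof. by apply/ffunP=> j; rewrite !ffunE; case: (j < k)%N. Qed.

(* Swapping the roles of y and r is a bijection of pairs, so the mix
   hits every point equally often. *)
Lemma sum_mix (k : nat) (A : {set point d L}) :
  (\sum_r \sum_y (mix k y r \in A : nat) = #|point d L| * #|A|)%N.
Proof.
pose h (p : point d L * point d L) := (mix k p.1 p.2, mix k p.2 p.1).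
have hK : involutive h.
  by move=> [r y]; rewrite /h /= !mix_swap.
rewrite pair_bigA /= (reindex_inj (inv_inj hK)) /=.
under eq_bigr do rewrite mix_swap.
rewrite -(pair_bigA _ (fun _ y => (y \in A : nat))) -sum_nat_const.
apply: eq_bigr => r _; rewrite -sum1_card [RHS]big_mkcond /=.
by apply: eq_bigr => y _; case: (y \in A).
Qed.

Definition blocked G r y := [exists k : 'I_d, mix k y r \notin full_points k G].

Definition hub G r :=
  \bigcup_(y | ~~ blocked G r y) \bigcup_(k < d) column k (mix k y r).

Lemma hub_column G r y (k : 'I_d) :
  ~~ blocked G r y -> column k (mix k y r) \subset hub G r.
Proof.
move=> unblocked; apply: subset_trans (bigcup_sup y unblocked).
exact: (bigcup_sup k).
Qed.

Lemma hub_subset G r : hub G r \subset G.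
Proof.
apply/bigcupsP=> y /existsPn unblocked; apply/bigcupsP=> k _.
by have := unblocked k; rewrite negbK inE.
Qed.

Lemma mem_hub G r y : (0 < d)%N -> ~~ blocked G r y -> y \in hub G r.
Proof.
move=> d_gt0 unblocked; apply: (subsetP (hub_column (Ordinal d_gt0) unblocked)).
by rewrite mix0 column_refl.
Qed.

Lemma staircase_connect G r y : ~~ blocked G r y ->
  forall m, (m <= d)%N -> connect (induced_adj (hub G r)) y (mix m y r).
Proof.
move=> unblocked; elim=> [|m IH] m_le; first by rewrite mix0 connect0.
apply: connect_trans (IH (ltnW m_le)) _.
apply: (column_connect (hub_column (Ordinal m_le) unblocked)).
  exact: column_refl.
exact: (mixS (Ordinal m_le)).
Qed.

Lemma hub_connected G r : nn_connected (hub G r).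
Proof.
have symc := sym_connect_sym (induced_adj_sym (hub G r)).
suff to_r u : u \in hub G r -> connect (induced_adj (hub G r)) u r.
  by move=> u v /to_r ur /to_r vr; apply: connect_trans ur _; rewrite symc.
case/bigcupP=> y unblocked /bigcupP [k _ u_col].
have to_stair := staircase_connect unblocked.
apply: connect_trans (column_connect (hub_column k unblocked) u_col (column_refl _ _)) _.
have stair_to_y : connect (induced_adj (hub G r)) (mix k y r) y.
  by rewrite symc; apply: to_stair; exact: ltnW.
apply: connect_trans stair_to_y _.
by have := to_stair d (leqnn d); rewrite mix_all.
Qed.

Lemma sum_blocked G :
  (\sum_r #|[set y | blocked G r y]|
     <= #|point d L| * \sum_(k < d) #|~: full_points k G|)%N.
Proof.
rewrite big_distrr /=.
under [leqRHS]eq_bigr => k _ do rewrite -(sum_mix k).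
rewrite exchange_big /= leq_sum // => r _; rewrite exchange_big /=.
rewrite -sum1_card big_mkcond /= leq_sum // => y _; rewrite inE.
case/boolP: (blocked G r y) => [/existsP [k not_full]|//].
by rewrite (bigD1 k) //= inE not_full.
Qed.

Lemma exists_large_connected G r0 : (0 < d)%N ->
  exists S, [/\ S \subset G, nn_connected S &
    (#|point d L| <= #|S| + \sum_(k < d) #|~: full_points k G|)%N].
Proof.
move=> d_gt0.
have [r _ r_min] := @arg_minnP _ r0 xpredT (fun r => #|[set y | blocked G r y]|) isT.
have few_blocked : (#|[set y | blocked G r y]| <= \sum_(k < d) #|~: full_points k G|)%N.
  have card_gt0 : (0 < #|point d L|)%N by apply/card_gt0P; exists r0.
  rewrite -(leq_pmul2l card_gt0).
  apply: leq_trans (sum_blocked G); rewrite -sum_nat_const.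
  by apply: leq_sum => r' _; exact: r_min.
exists (hub G r); split; [exact: hub_subset | exact: hub_connected |].
rewrite -(cardsC [set y | blocked G r y]) addnC leq_add //.
apply/subset_leq_card/subsetP=> y; rewrite !inE; exact: mem_hub.
Qed.

End Box.

Lemma card_not_full (R : realType) d L (x : R) (k : 'I_d) (G : {set point d L}) :
  (1 - x) * (L ^ (d - 1))%:R <= (#|columns_in k G|)%:R ->
  (#|~: full_points k G|)%:R <= x * (L ^ d)%:R.
Proof.
move=> many_cols.
have d_gt0 : (0 < d)%N by apply: leq_ltn_trans (ltn_ord k).
have eL : (L ^ d = L ^ (d - 1) * L)%N by rewrite -expnSr subn1 prednK.
have card_full := card_full_points k G.
have := cardsC (full_points k G); rewrite card_point => /(congr1 (fun n => n%:R : R)).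
rewrite natrD eL natrM => splitN.
move: card_full; rewrite -(ler_nat R) natrM => card_full.
have scaled_cols := ler_wpM2r (ler0n R L) many_cols.
lra.
Qed.

Theorem lemma6p1 (R : realType) (d L : nat) (x : R)
  (hd : (2 <= d)%N) (hL : (1 <= L)%N)
  (hx0 : 0 < x) (hx1 : x < 1 / ((2 * d - 1)`!)%:R)
  (G : {set point d L})
  (hcol : forall i : 'I_d,
     (1 - x) * (L ^ (d - 1))%:R <= (#|columns_in i G|)%:R) :
  exists S : {set point d L},
    [/\ S \subset G, nn_connected S &
        (1 - ((2 * d - 1)`!)%:R * x) * (L ^ d)%:R <= (#|S|)%:R].
Proof.
have [|S [SG S_conn]] := exists_large_connected G [ffun _ => Ordinal hL].
  exact: leq_trans hd.
rewrite card_point -(ler_nat R) natrD natr_sum => large_S.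
exists S; split => //.
have few_bad : \sum_(k < d) (#|~: full_points k G|)%:R <= d%:R * (x * (L ^ d)%:R) :> R.
  apply: le_trans (ler_sum _ (fun k _ => card_not_full (hcol k))) _.
  by rewrite sumr_const card_ord mulr_natl.
have d_le_fact : d%:R <= ((2 * d - 1)`!)%:R :> R.
  by rewrite ler_nat; apply: leq_trans (fact_geq _); lia.
have bad_le := ler_wpM2r (mulr_ge0 (ltW hx0) (ler0n R (L ^ d))) d_le_fact.
lra.
Qed.
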